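(* Let $0<a\le 1$ and let $x^1,\dots,x^T\in[a,1]^N$ be price relative vectors with $\max_i x^t_i=1$ for all $t$. Let $w^1\in\Delta^N$ have all entries positive, let $0<\eta\le 1$, and define $$w^{t+1}=w^t\odot\big(\mathbb{1}-\eta\,\Pi_{w^t}\nabla f^t\big),\qquad \nabla f^t=-\frac{x^t}{w^t\cdot x^t},\qquad (\Pi_{w^t}\nabla f^t)_i=\nabla_i f^t-w^t\cdot\nabla f^t.$$ Then for every $u\in\Delta^N$, $$\sum_{t=1}^T\log(u\cdot x^t)-\sum_{t=1}^T\log(w^t\cdot x^t)\le\frac{D(u\,|\,w^1)}{\eta}+\frac{T\eta}{2a^2(1-\eta)}.$$ In particular, taking $w^1=(1/N,\ldots,1/N)$ and $\eta=\frac{a\sqrt{2\log N}}{a\sqrt{2\log N}+\sqrt{T}}$ gives, for every $u\in\Delta^N$, $$\sum_{t=1}^T\log(u\cdot x^t)-\sum_{t=1}^T\log(w^t\cdot x^t)\le\frac{\sqrt{2T\log N}}{a}+\log N.$$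
   Context: $\Delta^N=\{w\in\mathbb{R}^N : \sum_i w_i=1,\ w_i\ge 0\}$; $\odot$ is componentwise multiplication and $\mathbb{1}$ the all-ones vector. The relative entropy is $D(u\,|\,w)=\sum_{i:\,u_i\ne0}u_i\log(u_i/w_i)$. *)

From HB Require Import structures.
From mathcomp Require Import all_boot all_order all_algebra.
From mathcomp Require Import all_classical all_reals exp.
Set Implicit Arguments. Unset Strict Implicit. Unset Printing Implicit Defensive.
Import Order.TTheory GRing.Theory Num.Theory.
Local Open Scope ring_scope.

Section Defs.
Variables (R : realType) (N : nat).
Implicit Types (w u x g : 'I_N -> R).

Definition dot w x : R := \sum_(i < N) w i * x i.

Definition simplex w : Prop := (forall i, 0 <= w i) /\ \sum_(i < N) w i = 1.

Definition relent u w : R := \sum_(i < N | u i != 0) u i * ln (u i / w i).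

(* gradient of f^t(w) = - log (w . x) : -x / (w . x) *)
Definition grad w x : 'I_N -> R := fun i => - (x i / dot w x).

Definition proj w g : 'I_N -> R := fun i => g i - dot w g.

Definition eg_step (eta : R) w x : 'I_N -> R :=
  fun i => w i * (1 - eta * proj w (grad w x) i).

(* weights t = w^{t+1}; x t = x^{t+1} (0-based indices) *)
Fixpoint weights (eta : R) (w1 : 'I_N -> R) (x : nat -> 'I_N -> R) (t : nat)
  : 'I_N -> R :=
  match t with
  | 0 => w1
  | t'.+1 => eg_step eta (weights eta w1 x t') (x t')
  end.

End Defs.

(* Exponentiated-gradient analysis with the relative entropy D(u|w) as potential.
   One step multiplies w_i by 1 + eta (r_i - 1), where r_i = x_i / (w . x) lies in
   [a, 1/a]; hence D(u|w) drops by sum_i u_i ln (1 + eta (r_i - 1)), while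
   ln (u . x / w . x) <= sum_i u_i (r_i - 1).  The regret of a step is therefore
   the drop divided by eta plus the gap z - ln (1 + z) at z = eta (r_i - 1), which
   is at most eta^2 / (2 a^2 (1 - eta)).  Summing over t telescopes, and D >= 0
   disposes of the final potential.  From the uniform start D(u|w^1) <= ln N, and
   the stated eta balances the two terms. *)

From Pilot Require Import Defs.
From HB Require Import structures.
From mathcomp Require Import all_boot all_order all_algebra.
From mathcomp Require Import all_classical all_reals exp.
From mathcomp Require Import normedtype derive.
From mathcomp Require Import lra ring.
Set Implicit Arguments. Unset Strict Implicit. Unset Printing Implicit Defensive.
Import Order.TTheory GRing.Theory Num.Theory.
Import numFieldNormedType.Exports.
Local Open Scope ring_scope.

Section LnBounds.
Variable R : realType.

Lemma ln_ge_1_subV (y : R) : 0 < y -> 1 - y^-1 <= ln y.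
Proof.
move=> y_gt0; have := @le_ln1Dx R (y^-1 - 1).
rewrite [1 + (_ - 1)]addrC subrK lnV ?posrE // ltrBrDr addNr invr_gt0 => /(_ y_gt0).
by rewrite lerNl opprB.
Qed.

Lemma ln1Dx_ge (z : R) : 0 <= z -> z - z ^+ 2 / 2 <= ln (1 + z).
Proof.
move=> z_ge0.
pose f (y : R) := ln y + y ^+ 2 / 2 - 2 * y.
have f'E (y : R) : 0 < y -> is_derive y 1 f (y^-1 + y - 2).
  move=> y_gt0; apply: is_derive_eq; first exact/is_deriveB/is_deriveD/is_derive1_ln.
  rewrite scaler0 add0r /=.
  change (y^-1 + 2^-1 * (y * 1 + y * 1) - 2 * 1 = y^-1 + y - 2).
  by rewrite !mulr1; lra.
have f_ndecr : f 1 <= f (1 + z).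
  apply: (@ger0_derive1_ndecry R f 1); rewrite ?lerDl //.
  - move=> y; rewrite in_itv /= andbT => y_gt1.
    exact/ex_derive/f'E/(lt_trans ltr01).
  - move=> y; rewrite in_itv /= andbT => y_gt1; have y_gt0 := lt_trans ltr01 y_gt1.
    have := f'E _ y_gt0; rewrite derive1E => ?; rewrite derive_val.
    have -> : y^-1 + y - 2 = (y - 1) ^+ 2 / y by field; rewrite gt_eqF.
    by rewrite divr_ge0 ?sqr_ge0 ?ltW.
  - apply: derivable_within_continuous => y; rewrite in_itv /= andbT => y_ge1.
    exact/ex_derive/f'E/(lt_le_trans ltr01).
move: f_ndecr; rewrite /f ln1 expr1n [1 + z]addrC sqrrD1; lra.
Qed.

(* For [z := eta (r - 1) < 0] the bound uses [1 + z >= 1 - eta], whence the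
   factor [1 - eta]. *)
Lemma ln1D_gap_le (a eta r : R) :
  0 < a -> 0 < eta -> eta < 1 -> a <= r -> r <= a^-1 ->
  eta * (r - 1) - ln (1 + eta * (r - 1)) <= eta ^+ 2 / (2 * a ^+ 2 * (1 - eta)).
Proof.
move=> a_gt0 eta_gt0 eta_lt1 a_le_r r_le_Va.
have ar_le1 : a * r <= 1 by rewrite -(mulfV (lt0r_neq0 a_gt0)) ler_pM2l.
have a_le1 : a <= 1 by nra.
have D_gt0 : 0 < 2 * a ^+ 2 * (1 - eta) by rewrite !mulr_gt0 ?exprn_gt0 ?subr_gt0.
have az_le : a * (eta * (r - 1)) <= eta * (1 - a) by nra.
have z_ge : - (eta * (1 - a)) <= eta * (r - 1) by nra.
move: az_le z_ge; set z := eta * (r - 1) => az_le z_ge.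
rewrite ler_pdivlMr //.
have [z_ge0 | z_lt0] := leP 0 z.
- have gap_le : z - ln (1 + z) <= z ^+ 2 / 2 by have := ln1Dx_ge z_ge0; lra.
  apply: le_trans (ler_wpM2r (ltW D_gt0) gap_le) _.
  have az_sq : (a * z) ^+ 2 <= eta ^+ 2 by rewrite ler_sqr ?nnegrE; nra.
  have : 0 <= (a * z) ^+ 2 * eta by rewrite mulr_ge0 ?sqr_ge0 ?ltW.
  have -> : z ^+ 2 / 2 * (2 * a ^+ 2 * (1 - eta)) = (a * z) ^+ 2 - (a * z) ^+ 2 * eta.
    by field.
  lra.
- have y_gt0 : 0 < 1 + z by nra.
  have := ln_ge_1_subV y_gt0.
  set q := (1 + z)^-1 => ln_ge.
  have qE : q * (1 + z) = 1 by rewrite mulVf ?gt_eqF.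
  have q_gt0 : 0 < q by rewrite invr_gt0.
  have gap_le : z - ln (1 + z) <= z ^+ 2 * q.
    suff -> : z ^+ 2 * q = z - (1 - q) by lra.
    by rewrite /q; field; rewrite gt_eqF.
  apply: le_trans (ler_wpM2r (ltW D_gt0) gap_le) _.
  have q_le : q * (1 - eta) <= 1.
    by rewrite -qE ler_wpM2l ?ltW //; nra.
  have z_sq : z ^+ 2 <= (eta * (1 - a)) ^+ 2.
    by rewrite -sqrrN ler_sqr ?nnegrE; nra.
  have a_sq : 2 * (a * (1 - a)) ^+ 2 <= 1.
    have : a * (1 - a) <= 1 / 4 by have := sqr_ge0 (a - 1 / 2); nra.
    nra.
  rewrite (_ : z ^+ 2 * q * _ = 2 * a ^+ 2 * z ^+ 2 * (q * (1 - eta))); last by ring.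
  have a2_ge0 : 0 <= 2 * a ^+ 2 by rewrite mulr_ge0 ?sqr_ge0.
  apply: le_trans (ler_wpM2l _ q_le) _; first by rewrite mulr_ge0 ?sqr_ge0.
  rewrite mulr1; apply: le_trans (ler_wpM2l a2_ge0 z_sq) _.
  rewrite (_ : 2 * a ^+ 2 * _ = eta ^+ 2 * (2 * (a * (1 - a)) ^+ 2)); last by ring.
  by rewrite -[leRHS]mulr1 ler_wpM2l ?sqr_ge0.
Qed.

End LnBounds.

Section Simplex.
Variables (R : realType) (N : nat).
Implicit Types (u w x : 'I_N -> R).

Lemma simplex_card_gt0 u : simplex u -> (0 < N)%N.
Proof.
by case: N u => [u [_]|//]; rewrite big_ord0 => /eqP; rewrite eq_sym oner_eq0.
Qed.

Lemma simplex_uniform : (0 < N)%N -> simplex (fun _ : 'I_N => N%:R^-1 : R).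
Proof.
move=> N_gt0; split=> [i|]; first by rewrite invr_ge0 ler0n.
by rewrite sumr_const card_ord -[_ *+ N]mulr_natr mulVf // pnatr_eq0 -lt0n.
Qed.

Lemma dot_bounds (lo hi : R) w x :
  simplex w -> (forall i, lo <= x i <= hi) -> lo <= dot w x <= hi.
Proof.
move=> [w_ge0 w_sum1] x_bnd; rewrite /dot.
have [lo_le x_le] : lo <= \sum_i w i * lo /\ \sum_i w i * hi <= hi.
  by rewrite -!mulr_suml w_sum1 !mul1r.
apply/andP; split.
  apply: le_trans lo_le (ler_sum _ _) => i _.
  by rewrite ler_wpM2l //; case/andP: (x_bnd i).
apply: le_trans (ler_sum _ _) x_le => i _.
by rewrite ler_wpM2l //; case/andP: (x_bnd i).
Qed.

Lemma relentE u w : relent u w = \sum_i u i * ln (u i / w i).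
Proof.
rewrite /relent [RHS](bigID (fun i => u i != 0)) /= [X in _ + X]big1 ?addr0 //.
by move=> i /negPn/eqP ->; rewrite mul0r.
Qed.

Lemma relent_ge0 u w :
  simplex u -> simplex w -> (forall i, 0 < w i) -> 0 <= relent u w.
Proof.
move=> [u_ge0 u_sum1] [_ w_sum1] w_gt0; rewrite relentE.
apply: le_trans (_ : 0 <= \sum_i (u i - w i)) (ler_sum _ _).
  by rewrite sumrB u_sum1 w_sum1 subrr.
move=> i _; have [->|ui_neq0] := eqVneq (u i) 0; first by rewrite mul0r sub0r oppr_le0 ltW.
have ui_gt0 : 0 < u i by rewrite lt_def ui_neq0 u_ge0.
have := ln_ge_1_subV (divr_gt0 ui_gt0 (w_gt0 i)).
rewrite invf_div => /(ler_wpM2l (ltW ui_gt0)).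
by rewrite mulrBr mulr1 mulrCA mulfV ?mulr1 ?lt0r_neq0.
Qed.

Lemma relent_uniform_le u : simplex u -> relent u (fun _ => N%:R^-1) <= ln N%:R.
Proof.
move=> [u_ge0 u_sum1]; rewrite relentE.
apply: le_trans (_ : _ <= \sum_i u i * ln N%:R) _; last by rewrite -mulr_suml u_sum1 mul1r.
apply: ler_sum => i _.
have [->|ui_neq0] := eqVneq (u i) 0; first by rewrite !mul0r.
have ui_gt0 : 0 < u i by rewrite lt_def ui_neq0 u_ge0.
have ui_le1 : u i <= 1 by rewrite -u_sum1 (bigD1 i) //= lerDl sumr_ge0.
have N_gt0 : 0 < N%:R :> R by rewrite ltr0n (leq_ltn_trans (leq0n i) (ltn_ord i)).
apply: ler_wpM2l; first exact: ltW.
rewrite invrK ler_ln ?posrE ?mulr_gt0 //.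
exact: ler_piMl (ltW N_gt0) ui_le1.
Qed.

End Simplex.

Section EGStep.
Variables (R : realType) (N : nat).
Implicit Types (eta : R) (u w x : 'I_N -> R).

Definition eg_factor eta w x i : R := 1 + eta * (x i / dot w x - 1).

Lemma dot_grad w x : \sum_i w i = 1 -> dot w x != 0 -> dot w (grad w x) = -1.
Proof.
move=> w_sum1 wx_neq0; rewrite /dot /grad.
under eq_bigr => i _ do rewrite mulrN mulrA.
by rewrite sumrN -mulr_suml -/(dot w x) mulfV.
Qed.

Lemma eg_stepE eta w x i : \sum_i w i = 1 -> dot w x != 0 ->
  eg_step eta w x i = w i * eg_factor eta w x i.
Proof.
move=> w_sum1 wx_neq0; rewrite /eg_step /Defs.proj dot_grad // /grad /eg_factor.
congr (_ * _); ring.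
Qed.

Lemma eg_factor_gt0 eta w x i : 0 <= eta < 1 -> 0 < dot w x -> 0 <= x i ->
  0 < eg_factor eta w x i.
Proof.
move=> /andP[eta_ge0 eta_lt1] wx_gt0 xi_ge0.
have : 0 <= x i / dot w x by rewrite divr_ge0 // ltW.
rewrite /eg_factor; nra.
Qed.

Lemma eg_step_simplex eta w x : 0 <= eta < 1 ->
  simplex w -> (forall i, 0 < w i) -> (forall i, 0 <= x i) -> 0 < dot w x ->
  simplex (eg_step eta w x) /\ (forall i, 0 < eg_step eta w x i).
Proof.
move=> eta_bnd [_ w_sum1] w_gt0 x_ge0 wx_gt0.
have stepE i := eg_stepE eta i w_sum1 (lt0r_neq0 wx_gt0).
have step_gt0 i : 0 < eg_step eta w x i by rewrite stepE mulr_gt0 ?eg_factor_gt0.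
split=> //; split=> [i|]; first exact: ltW.
under eq_bigr => i _ do rewrite stepE /eg_factor mulrDr mulr1 mulrCA mulrBr mulr1 mulrA.
rewrite big_split /= -mulr_sumr sumrB -mulr_suml -/(dot w x) mulfV ?gt_eqF //.
by rewrite w_sum1 subrr mulr0 addr0.
Qed.

Lemma relent_eg_step eta u w x : 0 <= eta < 1 -> (forall i, 0 <= u i) ->
  \sum_i w i = 1 -> (forall i, 0 < w i) -> (forall i, 0 <= x i) -> 0 < dot w x ->
  relent u w - relent u (eg_step eta w x) = \sum_i u i * ln (eg_factor eta w x i).
Proof.
move=> eta_bnd u_ge0 w_sum1 w_gt0 x_ge0 wx_gt0; rewrite !relentE -sumrB.
apply: eq_bigr => i _; rewrite eg_stepE ?gt_eqF // -mulrBr.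
have [->|ui_neq0] := eqVneq (u i) 0; first by rewrite !mul0r.
have ui_gt0 : 0 < u i by rewrite lt_def ui_neq0 u_ge0.
rewrite invfM mulrA [ln (u i / w i / _)]ln_div ?posrE ?divr_gt0 ?eg_factor_gt0 //.
by congr (_ * _); ring.
Qed.

Lemma weights_eta0 w1 (x : nat -> 'I_N -> R) t : weights 0 w1 x t = w1.
Proof.
elim: t => //= t ->; apply/funext => i.
by rewrite /eg_step mul0r subr0 mulr1.
Qed.

End EGStep.

Section Regret.
Variables (R : realType) (N : nat) (a eta : R).
Hypotheses (a_gt0 : 0 < a) (eta_gt0 : 0 < eta) (eta_lt1 : eta < 1).
Implicit Types (u w x : 'I_N -> R).

Lemma eg_step_regret u w x : (forall i, a <= x i <= 1) ->
  simplex u -> simplex w -> (forall i, 0 < w i) ->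
  ln (dot u x) - ln (dot w x) <=
    (relent u w - relent u (eg_step eta w x)) / eta + eta / (2 * a ^+ 2 * (1 - eta)).
Proof.
move=> x_bnd u_simplex w_simplex w_gt0.
have [[u_ge0 u_sum1] [_ w_sum1]] := (u_simplex, w_simplex).
have /andP[a_le_s s_le1] := dot_bounds w_simplex x_bnd.
have /andP[a_le_ux _] := dot_bounds u_simplex x_bnd.
have x_ge0 i : 0 <= x i by case/andP: (x_bnd i) => /(le_trans (ltW a_gt0)).
have eta_bnd : 0 <= eta < 1 by rewrite ltW.
set s := dot w x in a_le_s s_le1 *.
have s_gt0 : 0 < s := lt_le_trans a_gt0 a_le_s.
have ux_gt0 : 0 < dot u x := lt_le_trans a_gt0 a_le_ux.
have ratio_bnd i : a <= x i / s <= a^-1.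
  have /andP[a_le_xi xi_le1] := x_bnd i.
  rewrite ler_pdivlMr // ler_pdivrMr //; apply/andP; split.
    exact: le_trans (ler_piMr (ltW a_gt0) s_le1) a_le_xi.
  by apply: le_trans xi_le1 _; rewrite -(mulVf (lt0r_neq0 a_gt0)) ler_pM2l ?invr_gt0.
have ln_ratio_le : ln (dot u x) - ln s <= \sum_i u i * (x i / s - 1).
  rewrite -ln_div ?posrE //.
  under eq_bigr => i _ do rewrite mulrBr mulr1 mulrA.
  rewrite sumrB -mulr_suml u_sum1 -/(dot u x).
  have := @le_ln1Dx R (dot u x / s - 1); rewrite [1 + _]addrC subrK; apply.
  by rewrite ltrBrDr addNr divr_gt0.
have gap_le : eta * \sum_i u i * (x i / s - 1) <=
    relent u w - relent u (eg_step eta w x) + eta ^+ 2 / (2 * a ^+ 2 * (1 - eta)).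
  rewrite relent_eg_step // mulr_sumr.
  rewrite -[X in _ + X]mul1r -[X in _ + X * _]u_sum1 mulr_suml -big_split /=.
  apply: ler_sum => i _; rewrite mulrCA -mulrDr; apply: (ler_wpM2l (u_ge0 i)).
  have /andP[lo hi] := ratio_bnd i.
  have := ln1D_gap_le a_gt0 eta_gt0 eta_lt1 lo hi; rewrite /eg_factor; lra.
apply: le_trans ln_ratio_le _; rewrite -(ler_pM2l eta_gt0).
by rewrite mulrDr [eta * (_ / eta)]mulrC divfK ?gt_eqF // mulrA -expr2.
Qed.

Lemma weights_simplex w1 (x : nat -> 'I_N -> R) T :
  (forall t i, (t < T)%N -> a <= x t i <= 1) -> simplex w1 -> (forall i, 0 < w1 i) ->
  forall t, (t <= T)%N ->
    simplex (weights eta w1 x t) /\ (forall i, 0 < weights eta w1 x t i).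
Proof.
move=> x_bnd w1_simplex w1_gt0; elim=> [|t IH] t_lt //=.
have [wt_simplex wt_gt0] := IH (ltnW t_lt).
have /andP[a_le_wx _] := dot_bounds wt_simplex (fun i => x_bnd t i t_lt).
apply: eg_step_simplex => //; first by rewrite (ltW eta_gt0) eta_lt1.
  by move=> i; case/andP: (x_bnd t i t_lt) => /(le_trans (ltW a_gt0)).
exact: lt_le_trans a_le_wx.
Qed.

Theorem eg_regret_bound w1 (x : nat -> 'I_N -> R) T u :
  (forall t i, (t < T)%N -> a <= x t i <= 1) ->
  simplex w1 -> (forall i, 0 < w1 i) -> simplex u ->
  \sum_(t < T) ln (dot u (x t)) - \sum_(t < T) ln (dot (weights eta w1 x t) (x t))
    <= relent u w1 / eta + T%:R * eta / (2 * a ^+ 2 * (1 - eta)).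
Proof.
move=> x_bnd w1_simplex w1_gt0 u_simplex.
set W := weights eta w1 x; set K := eta / (2 * a ^+ 2 * (1 - eta)).
have W_simplex := weights_simplex x_bnd w1_simplex w1_gt0.
suff telescope n : (n <= T)%N ->
    \sum_(t < n) (ln (dot u (x t)) - ln (dot (W t) (x t))) <=
    (relent u w1 - relent u (W n)) / eta + n%:R * K.
  rewrite -sumrB -[T%:R * eta / _]mulrA -/K.
  apply: le_trans (telescope T (leqnn T)) _.
  rewrite lerD2r ler_pM2r ?invr_gt0 // gerBl.
  by have [WT_simplex WT_gt0] := W_simplex T (leqnn T); exact: relent_ge0.
elim: n => [|n IH] n_lt; first by rewrite big_ord0 subrr !mul0r addr0.
have [Wn_simplex Wn_gt0] := W_simplex n (ltnW n_lt).
have step := eg_step_regret (fun i => x_bnd n i n_lt) u_simplex Wn_simplex Wn_gt0.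
rewrite big_ord_recr /=; apply: le_trans (lerD (IH (ltnW n_lt)) step) _.
by rewrite le_eqVlt -addn1 natrD /W /= -/K; apply/orP; left; apply/eqP; ring.
Qed.

End Regret.

Lemma eg_tuned_rateE (R : realType) (a q s : R) : 0 < a -> 0 < q -> 0 < s ->
  q ^+ 2 / 2 / (a * q / (a * q + s)) +
    s ^+ 2 * (a * q / (a * q + s)) / (2 * a ^+ 2 * (1 - a * q / (a * q + s)))
  = q * s / a + q ^+ 2 / 2.
Proof.
move=> a_gt0 q_gt0 s_gt0; have aqs_gt0 : 0 < a * q + s by rewrite addr_gt0 ?mulr_gt0.
by field; rewrite addrAC subrr add0r !gt_eqF.
Qed.

Lemma eg_regret_uniform (R : realType) (N T : nat) (a : R) (x : nat -> 'I_N -> R)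
    (u : 'I_N -> R) :
  0 < a -> (1 < N)%N -> (0 < T)%N -> (forall t i, (t < T)%N -> a <= x t i <= 1) ->
  let eta := a * Num.sqrt (2 * ln N%:R) / (a * Num.sqrt (2 * ln N%:R) + Num.sqrt T%:R) in
  simplex u ->
  \sum_(t < T) ln (dot u (x t)) -
    \sum_(t < T) ln (dot (weights eta (fun _ => N%:R^-1) x t) (x t))
  <= Num.sqrt (2 * T%:R * ln N%:R) / a + ln N%:R.
Proof.
move=> a_gt0 N_gt1 T_gt0 x_bnd eta u_simplex.
have N_gt0 : (0 < N)%N := ltnW N_gt1.
have lnN_gt0 : 0 < ln (N%:R : R) by rewrite ln_gt0 // ltr1n.
have q_gt0 : 0 < Num.sqrt (2 * ln (N%:R : R)) by rewrite sqrtr_gt0 mulr_gt0.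
have s_gt0 : 0 < Num.sqrt (T%:R : R) by rewrite sqrtr_gt0 ltr0n.
have eta_gt0 : 0 < eta by rewrite divr_gt0 ?addr_gt0 ?mulr_gt0.
have eta_lt1 : eta < 1 by rewrite ltr_pdivrMr ?addr_gt0 ?mulr_gt0 // mul1r ltrDl.
have w1_gt0 (i : 'I_N) : 0 < N%:R^-1 :> R by rewrite invr_gt0 ltr0n.
apply: le_trans (eg_regret_bound a_gt0 eta_gt0 eta_lt1 x_bnd
  (simplex_uniform R N_gt0) w1_gt0 u_simplex) _.
apply: le_trans (_ : _ <= ln N%:R / eta + T%:R * eta / (2 * a ^+ 2 * (1 - eta))) _.
  by rewrite lerD2r ler_pM2r ?invr_gt0 //; exact: relent_uniform_le.
have lnNE : ln (N%:R : R) = Num.sqrt (2 * ln (N%:R : R)) ^+ 2 / 2.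
  by rewrite sqr_sqrtr ?mulr_ge0 ?ltW // mulrAC mulfV ?mul1r // pnatr_eq0.
have TE : (T%:R : R) = Num.sqrt (T%:R : R) ^+ 2 by rewrite sqr_sqrtr.
have sqrtE : Num.sqrt (2 * T%:R * ln N%:R) = Num.sqrt (2 * ln (N%:R : R)) * Num.sqrt T%:R.
  by rewrite mulrAC sqrtrM // mulr_ge0 // ltW.
rewrite sqrtE /eta.
move: (Num.sqrt (2 * ln N%:R)) q_gt0 lnNE => q q_gt0 ->.
move: (Num.sqrt T%:R) s_gt0 TE => s s_gt0 ->.
by rewrite eg_tuned_rateE.
Qed.

Theorem theorem5p2 (R : realType) (N T : nat) (a : R) (x : nat -> 'I_N -> R) :
  0 < a -> a <= 1 ->
  (forall t i, (t < T)%N -> a <= x t i /\ x t i <= 1) ->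
  (forall t, (t < T)%N -> exists i, x t i = 1) ->
  (forall (w1 : 'I_N -> R) (eta : R),
     simplex w1 -> (forall i, 0 < w1 i) -> 0 < eta -> eta < 1 ->
     forall u : 'I_N -> R, simplex u ->
       \sum_(t < T) ln (dot u (x t)) - \sum_(t < T) ln (dot (weights eta w1 x t) (x t))
         <= relent u w1 / eta + T%:R * eta / (2 * a ^+ 2 * (1 - eta)))
  /\
  (let w1 := fun _ : 'I_N => (N%:R)^-1 in
   let eta := a * Num.sqrt (2 * ln N%:R) / (a * Num.sqrt (2 * ln N%:R) + Num.sqrt T%:R) in
   forall u : 'I_N -> R, simplex u ->
     \sum_(t < T) ln (dot u (x t)) - \sum_(t < T) ln (dot (weights eta w1 x t) (x t))
       <= Num.sqrt (2 * T%:R * ln N%:R) / a + ln N%:R).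
Proof.
move=> a_gt0 _ x_bnd _.
have {}x_bnd t i : (t < T)%N -> a <= x t i <= 1 by move/(x_bnd t i)/andP.
split=> [w1 eta w1_simplex w1_gt0 eta_gt0 eta_lt1 u|w1 eta u u_simplex].
  exact: eg_regret_bound.
have N_gt0 := simplex_card_gt0 u_simplex.
have [N_gt1|N_le1] := ltnP 1 N.
  have [->|T_gt0] := posnP T; last exact: eg_regret_uniform.
  by rewrite !big_ord0 subrr mulr0 mul0r sqrtr0 mul0r add0r ln_ge0 // ler1n ltnW.
have N1 : N = 1%N by apply/anti_leq; rewrite N_le1 N_gt0.
subst N; have eta0 : eta = 0 by rewrite /eta mulr1n ln1 mulr0 sqrtr0 mulr0 mul0r.
have -> : u = w1.
  by case: u_simplex => _; rewrite big_ord1 /w1 => u1; apply/funext => i; rewrite ord1 u1 invr1.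
under [X in _ - X]eq_bigr => t _ do rewrite eta0 weights_eta0.
by rewrite subrr mulr1n ln1 mulr0 sqrtr0 mul0r addr0.
Qed.
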